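(* The affine scheme $\mathscr{H}_{\mathbb{A}}^{13}\cap\{p_{221}=p_{212}=p_{122}=1,\ p_{222}=p_{211}=p_{121}=p_{112}=0\}$ coincides with $\mathscr{S}_{\mathbb{A}}^{6}$ under the identification of coordinates $s_{11}=u_1$, $s_{12}=x_{13}$, $s_{13}=x_{12}$, $s_{22}=u_2$, $s_{23}=x_{11}$, $s_{33}=u_3$, $\sigma_1=x_{21}$, $\sigma_2=x_{22}$, $\sigma_3=x_{23}$, $t=-p_{111}$ (left-hand sides are coordinates of $\mathscr{S}_{\mathbb{A}}^6$, right-hand sides those of $\mathscr{H}_{\mathbb{A}}^{13}$).
   Context: $\mathscr{H}_{\mathbb{A}}^{13}\subset\mathbb{A}^{17}$ (coordinates $u_1,u_2,u_3$, $x_{ij}$ with $i\in\{1,2\},j\in\{1,2,3\}$, $p_{abc}$ with $a,b,c\in\{1,2\}$) is defined by $-u_1\bm{x}_1+D^{(3)}\bm{x}_2=\bm{0}$, $-u_2\bm{x}_2+D^{(1)}\bm{x}_3=\bm{0}$, $-u_3\bm{x}_3-(D^{(2)})^{\dagger}\bm{x}_1=\bm{0}$, $u_2u_3+\det D^{(1)}=0$, $u_3u_1+\det D^{(2)}=0$, $u_1u_2+\det D^{(3)}=0$, where $\bm{x}_j=(x_{1j},x_{2j})^t$, $M^\dagger$ is the adjugate, $D^{(1)}_{ij}=p_{1ij}x_{21}-p_{2ij}x_{11}$, $D^{(2)}_{ij}=p_{i1j}x_{22}-p_{i2j}x_{12}$, $D^{(3)}_{ij}=p_{ij1}x_{23}-p_{ij2}x_{13}$,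 $D^{(k)}$ has rows $(-D^{(k)}_{12},D^{(k)}_{11})$, $(-D^{(k)}_{22},D^{(k)}_{21})$. $\mathscr{S}_{\mathbb{A}}^{6}$ is the affine scheme in the $10$-dimensional affine space with coordinates $s_{11},s_{12},s_{13},s_{22},s_{23},s_{33},\sigma_1,\sigma_2,\sigma_3,t$ defined by $\mathsf{S}\bm{\sigma}=\bm{0}$ and $\mathsf{S}^{\dagger}=t\,\bm{\sigma}\,{}^t\bm{\sigma}$, where $\mathsf{S}$ is the symmetric matrix $(s_{ij})$ (with $s_{ji}=s_{ij}$), $\bm{\sigma}=(\sigma_1,\sigma_2,\sigma_3)^t$, and $\mathsf{S}^\dagger$ is the adjugate. *)

From HB Require Import structures.
From mathcomp Require Import all_boot all_order all_algebra.
From mathcomp Require Import mpoly.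
Set Implicit Arguments. Unset Strict Implicit. Unset Printing Implicit Defensive.
Import Order.TTheory GRing.Theory.
Local Open Scope ring_scope.

Definition in_ideal {A : comRingType} (gens : seq A) (p : A) : Prop :=
  exists cs : seq A, p = \sum_(i < size gens) cs`_i * gens`_i.

Definition same_ideal {A : comRingType} (g1 g2 : seq A) : Prop :=
  forall p, in_ideal g1 p <-> in_ideal g2 p.

Section Equations.
Variable A : comRingType.

Variables (u : nat -> A) (x : nat -> nat -> A) (p : nat -> nat -> nat -> A).

Definition xv (j : nat) : 'cV[A]_2 := \col_(i < 2) x i.+1 j.

Definition Dentry (k i j : nat) : A :=
  match k with
  | 1 => p 1 i j * x 2 1 - p 2 i j * x 1 1
  | 2 => p i 1 j * x 2 2 - p i 2 j * x 1 2
  | _ => p i j 1 * x 2 3 - p i j 2 * x 1 3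
  end.

Definition Dmat (k : nat) : 'M[A]_2 :=
  \matrix_(a < 2, b < 2) (if b == 0 :> nat then - Dentry k a.+1 2 else Dentry k a.+1 1).

Definition HE1 : 'cV[A]_2 := - u 1 *: xv 1 + Dmat 3 *m xv 2.
Definition HE2 : 'cV[A]_2 := - u 2 *: xv 2 + Dmat 1 *m xv 3.
Definition HE3 : 'cV[A]_2 := - u 3 *: xv 3 - \adj (Dmat 2) *m xv 1.

Definition H_gens : seq A :=
  [seq HE1 i ord0 | i : 'I_2] ++ [seq HE2 i ord0 | i : 'I_2] ++
  [seq HE3 i ord0 | i : 'I_2] ++
  [:: u 2 * u 3 + \det (Dmat 1); u 3 * u 1 + \det (Dmat 2);
      u 1 * u 2 + \det (Dmat 3)].
End Equations.

Section SEquations.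
Variable A : comRingType.
Variables (s : nat -> nat -> A) (sigma : nat -> A) (t : A).

(* symmetric matrix (s_ij) with s_ji = s_ij, built from the s_ij with i <= j *)
Definition Smat : 'M[A]_3 := \matrix_(i < 3, j < 3) s (minn i j).+1 (maxn i j).+1.
Definition sigv : 'cV[A]_3 := \col_(i < 3) sigma i.+1.

Definition S_gens : seq A :=
  [seq (Smat *m sigv) i ord0 | i : 'I_3] ++
  [seq (\adj Smat - t *: (sigv *m sigv^T)) ij.1 ij.2 | ij : 'I_3 * 'I_3].
End SEquations.

(* ---- coordinates on the 10-dimensional slice, named after H's coordinates:
   index 0,1,2 = u1,u2,u3 ; 3 = x11, 4 = x21, 5 = x12, 6 = x22, 7 = x13,
   8 = x23 ; 9 = p111. ---- *)
Definition V {R : comRingType} (k : nat) : {mpoly R[10]} := 'X_(inord k).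

Definition Hu {R : comRingType} (i : nat) : {mpoly R[10]} := V (i.-1).
Definition Hx {R : comRingType} (i j : nat) : {mpoly R[10]} :=
  V (3 + 2 * j.-1 + i.-1).
Definition Hp {R : comRingType} (a b c : nat) : {mpoly R[10]} :=
  match a, b, c with
  | 1, 1, 1 => V 9
  | 2, 2, 1 | 2, 1, 2 | 1, 2, 2 => 1
  | _, _, _ => 0
  end.

Definition Ss {R : comRingType} (i j : nat) : {mpoly R[10]} :=
  match i, j with
  | 1, 1 => Hu 1 | 1, 2 => Hx 1 3 | 1, 3 => Hx 1 2
  | 2, 2 => Hu 2 | 2, 3 => Hx 1 1 | 3, 3 => Hu 3
  | _, _ => 0
  end.
Definition Ssigma {R : comRingType} (i : nat) : {mpoly R[10]} := Hx 2 i.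
Definition St {R : comRingType} : {mpoly R[10]} := - Hp 1 1 1.

(* On the slice, the matrices D^(k) become linear in the coordinates of S^6, and
   the nine generators of H^13 turn out to be, up to sign, the three entries of
   S sigma and the six entries on and above the diagonal of adj S - t sigma sigma^t.
   That matrix is symmetric because S is, so its entries below the diagonal
   repeat ones above it, and the two lists of generators span the same ideal. *)
From Pilot Require Import Defs.
From HB Require Import structures.
From mathcomp Require Import all_boot all_order all_algebra.
From mathcomp Require Import mpoly.
From mathcomp Require Import ring.
Set Implicit Arguments. Unset Strict Implicit. Unset Printing Implicit Defensive.
Import GRing.Theory.
Local Open Scope ring_scope.

Section IdealMembership.
Variable A : comRingType.
Implicit Types (g : seq A) (p : A).

Lemma in_idealP g p :
  in_ideal g p <-> exists f : 'I_(size g) -> A, p = \sum_i f i * g`_i.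
Proof.
split=> [[cs ->]|[f ->]]; first by exists (fun i => cs`_i).
exists [seq oapp f 0 (insub i) | i <- iota 0 (size g)].
by apply: eq_bigr => i _; rewrite (nth_map 0%N) ?size_iota // nth_iota // add0n valK.
Qed.

Lemma in_ideal_nth g k : (k < size g)%N -> in_ideal g g`_k.
Proof.
move=> lt_k_g; apply/in_idealP; exists (fun i => (i == Ordinal lt_k_g)%:R).
rewrite (bigD1 (Ordinal lt_k_g)) //= eqxx mul1r big1 ?addr0 // => i /negbTE->.
by rewrite mul0r.
Qed.

Lemma in_idealN g p : in_ideal g (- p) <-> in_ideal g p.
Proof.
suff opp_ideal q : in_ideal g q -> in_ideal g (- q).
  by split=> /opp_ideal; rewrite ?opprK.
move=> /in_idealP[f ->]; apply/in_idealP; exists (fun i => - f i).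
by rewrite -sumrN; apply: eq_bigr => i _; rewrite mulNr.
Qed.

Lemma in_ideal_subset g1 g2 :
  (forall i, (i < size g1)%N -> in_ideal g2 g1`_i) ->
  forall p, in_ideal g1 p -> in_ideal g2 p.
Proof.
move=> gens_sub p /in_idealP[f ->]; apply: (big_ind (in_ideal g2)).
- by apply/in_idealP; exists (fun=> 0); rewrite big1 // => i _; rewrite mul0r.
- move=> _ _ /in_idealP[f1 ->] /in_idealP[f2 ->]; apply/in_idealP.
  exists (fun i => f1 i + f2 i); rewrite -big_split.
  by apply: eq_bigr => i _; rewrite mulrDl.
- move=> i _; have /in_idealP[h ->] := gens_sub i (ltn_ord i); apply/in_idealP.
  exists (fun j => f i * h j); rewrite mulr_sumr.
  by apply: eq_bigr => j _; rewrite mulrA.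
Qed.

Lemma same_ideal_nth g1 g2 :
  (forall i, (i < size g1)%N -> in_ideal g2 g1`_i) ->
  (forall j, (j < size g2)%N -> in_ideal g1 g2`_j) -> same_ideal g1 g2.
Proof. by move=> sub12 sub21 p; split; apply: in_ideal_subset. Qed.

End IdealMembership.

Arguments in_ideal_nth {A g} k.

Lemma enum_ord_inord n : enum 'I_n.+1 = [seq inord k | k <- iota 0 n.+1].
Proof. by rewrite -val_enum_ord -map_comp map_id_in // => i _ /=; rewrite inord_val. Qed.

Lemma enum_prod (T1 T2 : finType) :
  enum {: T1 * T2} = [seq (x1, x2) | x1 <- enum T1, x2 <- enum T2].
Proof. by rewrite [LHS]enumT unlock. Qed.

Section SEntries.
Variables (A : comRingType) (s : nat -> nat -> A) (sigma : nat -> A) (t : A).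

Definition Svec (i : nat) : A := (Smat s *m sigv sigma) (inord i) 0.

Definition Sadj (i j : nat) : A :=
  (\adj (Smat s) - t *: (sigv sigma *m (sigv sigma)^T)) (inord i) (inord j).

Lemma S_gensE : S_gens s sigma t =
  [:: Svec 0; Svec 1; Svec 2;
      Sadj 0 0; Sadj 0 1; Sadj 0 2; Sadj 1 0; Sadj 1 1; Sadj 1 2;
      Sadj 2 0; Sadj 2 1; Sadj 2 2].
Proof. by rewrite /S_gens /image_mem enum_prod !enum_ord_inord. Qed.

Lemma Smat_tr : (Smat s)^T = Smat s.
Proof. by apply/matrixP => i j; rewrite !mxE minnC maxnC. Qed.

Lemma Sadj_sym i j : Sadj j i = Sadj i j.
Proof.
rewrite /Sadj; set N := \adj _ - _.
have N_tr : N^T = N by rewrite linearB linearZ /= trmx_adj Smat_tr trmx_mul trmxK.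
by rewrite -[in LHS]N_tr mxE.
Qed.

End SEntries.

(* [Hp], [Ss], [Ssigma] and [St] of Defs are the instances [p_slice (V 9)],
   [s_of_ux Hu Hx], [Hx 2] and [- V 9] of the definitions below. *)
Section Slice.
Variables (A : comRingType) (u : nat -> A) (x : nat -> nat -> A) (p111 : A).

Definition p_slice (a b c : nat) : A :=
  match a, b, c with
  | 1, 1, 1 => p111
  | 2, 2, 1 | 2, 1, 2 | 1, 2, 2 => 1
  | _, _, _ => 0
  end.

Definition s_of_ux (i j : nat) : A :=
  match i, j with
  | 1, 1 => u 1 | 1, 2 => x 1 3 | 1, 3 => x 1 2
  | 2, 2 => u 2 | 2, 3 => x 1 1 | 3, 3 => u 3
  | _, _ => 0
  end.

Local Notation Sv := (Svec s_of_ux (x 2)).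
Local Notation Sa := (Sadj s_of_ux (x 2) (- p111)).

Ltac mx_eval :=
  rewrite /HE1 /HE2 /HE3 /Svec /Sadj /Smat /sigv /xv /Dmat;
  do 3 (rewrite ?mxE ?inordK //= ?(expand_det_row _ ord0) /cofactor;
        rewrite ?big_ord_recl ?big_ord0 /= ?det_mx11 ?det_mx00 ?mxE /=);
  rewrite /Dentry /p_slice /s_of_ux /bump /= ?addn0 ?add0n.

Lemma H_gens_slice : H_gens u x p_slice =
  [:: Sa 1 2; - Sv 0; Sa 0 2; - Sv 1; Sa 0 1; - Sv 2; Sa 0 0; Sa 1 1; Sa 2 2].
Proof.
rewrite /H_gens /image_mem !enum_ord_inord /=.
by congr [:: _; _; _; _; _; _; _; _; _]; mx_eval; ring.
Qed.

Lemma slice_same_ideal :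
  same_ideal (H_gens u x p_slice) (S_gens s_of_ux (x 2) (- p111)).
Proof.
rewrite H_gens_slice S_gensE; apply: same_ideal_nth.
(* In the second list, [Sv i] sits at index i and [Sa i j] at index 3 + 3 i + j. *)
all: move=> -[|[|[|[|[|[|[|[|[|[|[|[|//]]]]]]]]]]]] //= _.
- by apply: (in_ideal_nth 8).
- by apply/in_idealN/(in_ideal_nth 0).
- by apply: (in_ideal_nth 5).
- by apply/in_idealN/(in_ideal_nth 1).
- by apply: (in_ideal_nth 4).
- by apply/in_idealN/(in_ideal_nth 2).
- by apply: (in_ideal_nth 3).
- by apply: (in_ideal_nth 7).
- by apply: (in_ideal_nth 11).
- by apply/in_idealN/(in_ideal_nth 1).
- by apply/in_idealN/(in_ideal_nth 3).
- by apply/in_idealN/(in_ideal_nth 5).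
- by apply: (in_ideal_nth 6).
- by apply: (in_ideal_nth 4).
- by apply: (in_ideal_nth 2).
- by rewrite [Sa 1 0]Sadj_sym; apply: (in_ideal_nth 4).
- by apply: (in_ideal_nth 7).
- by apply: (in_ideal_nth 0).
- by rewrite [Sa 2 0]Sadj_sym; apply: (in_ideal_nth 2).
- by rewrite [Sa 2 1]Sadj_sym; apply: (in_ideal_nth 0).
- by apply: (in_ideal_nth 8).
Qed.

End Slice.

Theorem proposition6p7 (R : comRingType) :
  same_ideal (H_gens (@Hu R) (@Hx R) (@Hp R)) (S_gens (@Ss R) (@Ssigma R) (@St R)).
Proof. exact: slice_same_ideal. Qed.
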